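(* Let $m,d\in\mathbb N$. Let $G$ be an $m$-joined graph and let $W\subseteq V(G)$ satisfy $|W|\ge (3d+4)m$. Then there is a set $B\subseteq V(G)$ with $|B|\le m$ such that every $U\subseteq V(G)\setminus B$ with $|U|\le 2m$ satisfies $|N(U,W\setminus B)|\ge d|U|$.
   Context: A graph $G$ is $m$-joined if there is an edge between any two disjoint vertex sets each containing at least $m$ vertices. For $U\subseteq V(G)$, $N(U)=\big(\bigcup_{u\in U}N(u)\big)\setminus U$ is the exterior neighbourhood, and $N(U,W)=N(U)\cap W$. *)

From mathcomp Require Import all_boot.
Set Implicit Arguments. Unset Strict Implicit. Unset Printing Implicit Defensive.

Definition simple_graph (T : finType) (e : rel T) : Prop :=
  symmetric e /\ irreflexive e.

Definition m_joined (T : finType) (e : rel T) (m : nat) : Prop :=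
  forall A B : {set T}, [disjoint A & B] -> m <= #|A| -> m <= #|B| ->
    exists x, exists y, [/\ x \in A, y \in B & e x y].

Definition ext_nbhd (T : finType) (e : rel T) (U : {set T}) : {set T} :=
  [set v | [exists u in U, e u v]] :\: U.

Definition nbhd_in (T : finType) (e : rel T) (U W : {set T}) : {set T} :=
  ext_nbhd e U :&: W.

From mathcomp Require Import all_boot.
From mathcomp Require Import zify.
Set Implicit Arguments. Unset Strict Implicit. Unset Printing Implicit Defensive.

(* Take B of maximum size among the sets of at most m vertices whose
   neighbourhood in W has at most d |B| vertices (the empty set is one).
   If some U outside B with |U| <= 2m had fewer than d |U| neighbours in
   W \ B, then B :|: U would again have few neighbours in W, and it has
   more than |B| vertices, so by maximality more than m of them. But an
   m-joined graph forces every set S of at least m vertices to satisfy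
   |W| < |S| + |N(S, W)| + m: otherwise the part of W outside S and N(S)
   has m vertices and no edge to S. Here |B :|: U| <= 3m and its
   neighbourhood has at most 3dm vertices, contradicting |W| >= (3d+4)m. *)

Section Neighbourhoods.

Variables (T : finType) (e : rel T).

Lemma nbhd_in_set0 (W : {set T}) : nbhd_in e set0 W = set0.
Proof.
by apply/setP => v; rewrite !inE; case: existsP => // -[u]; rewrite inE.
Qed.

Lemma nbhd_in_setU (B U W : {set T}) :
  nbhd_in e (B :|: U) W \subset nbhd_in e B W :|: nbhd_in e U (W :\: B).
Proof.
apply/subsetP => v; rewrite !inE negb_or.
case/andP=> /andP[/andP[vB vU] /existsP[u /andP[]]]; rewrite inE => /orP[uB|uU] euv vW.
- by rewrite vB vW /= andbT; apply/orP; left; apply/existsP; exists u; rewrite uB.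
- by rewrite vU vB vW /= !andbT; apply/orP; right; apply/existsP; exists u; rewrite uU.
Qed.

Lemma m_joined_nbhd_in_large (m : nat) (S W : {set T}) :
  m_joined e m -> m <= #|S| -> #|W| < #|S| + #|nbhd_in e S W| + m.
Proof.
move=> hJ hS; rewrite ltnNge; apply/negP => hW.
set R := W :\: (S :|: nbhd_in e S W).
have hR : m <= #|R|.
  have := (leq_card_setU S (nbhd_in e S W)).1.
  have := subset_leq_card (subsetIr W (S :|: nbhd_in e S W)).
  rewrite /R cardsD; lia.
have SR : [disjoint S & R].
  by rewrite -setI_eq0; apply/eqP/setP => x; rewrite !inE; case: (x \in S); rewrite ?andbF.
have [x [y [xS yR exy]]] := hJ S R SR hS hR.
move: yR; rewrite !inE negb_or => /andP[/andP[yS /negP yN] yW]; apply: yN.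
by rewrite yS yW /= andbT; apply/existsP; exists x; rewrite xS.
Qed.

Definition poorly_expanding (d : nat) (W B : {set T}) : bool :=
  #|nbhd_in e B W| <= d * #|B|.

Lemma poorly_expanding_setU (d : nat) (W B U : {set T}) :
  [disjoint B & U] -> poorly_expanding d W B ->
  #|nbhd_in e U (W :\: B)| <= d * #|U| -> poorly_expanding d W (B :|: U).
Proof.
rewrite /poorly_expanding => BU hB hU.
have := (leq_card_setU (nbhd_in e B W) (nbhd_in e U (W :\: B))).1.
have := subset_leq_card (nbhd_in_setU B U W).
rewrite (cardsU B U) (disjoint_setI0 BU) cards0 subn0 mulnDr; lia.
Qed.

End Neighbourhoods.

Theorem proposition3p35 (T : finType) (e : rel T) (m d : nat)
  (hG : simple_graph e) (hJ : m_joined e m) (W : {set T})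
  (hW : (3 * d + 4) * m <= #|W|) :
  exists B : {set T}, #|B| <= m /\
    forall U : {set T}, U \subset ~: B -> #|U| <= 2 * m ->
      d * #|U| <= #|nbhd_in e U (W :\: B)|.
Proof.
pose admissible (B : {set T}) := (#|B| <= m) && poorly_expanding e d W B.
have admissible0 : admissible set0.
  by rewrite /admissible /poorly_expanding nbhd_in_set0 !cards0.
have [B /andP[hBm hB] Bmax] := arg_maxnP (fun B : {set T} => #|B|) admissible0.
exists B; split=> // U hUB hU.
rewrite leqNgt; apply/negP => hlt.
have BU : [disjoint B & U] by rewrite disjoint_sym disjoints_subset.
have hBU := poorly_expanding_setU BU hB (ltnW hlt).
have cardBU : #|B :|: U| = #|B| + #|U| by rewrite cardsU (disjoint_setI0 BU) cards0 subn0.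
have U_gt0 : 0 < #|U| by case: #|U| hlt; rewrite ?muln0.
have [BUm | mBU] := leqP #|B :|: U| m.
  by have := Bmax _ (introT andP (conj BUm hBU)); lia.
have := m_joined_nbhd_in_large W hJ (ltnW mBU).
move: hBU; rewrite /poorly_expanding; nia.
Qed.
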